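(* Fix $s>0$. For each $\delta\in(0,\delta_0)$ and each $\rho\in(\delta/\delta_0,1)$ there exists a constant $c_3=c_3(\delta,\rho)>0$ such that for every integer $n\ge1$ and every partition $\lambda=1^{n_1}2^{n_2}\cdots$ of $n$, \[ \mathsf L_{[0,\delta n^{5/4}]}\le c_3\,\rho^{n+1}. \]
   Context: For integers $a,i\ge1$ let $f_{a,i}=\frac1{2i}\sum_{d\mid i,\ d\text{ odd}}\mu(d)(2a)^{i/d}$ ($\mu$ the Möbius function; sum over positive odd divisors of $i$), a positive integer, and define $g_{a,i}$ by $f_{a,i}=\frac{(2a)^i}{2i}g_{a,i}$. Let $c_1>0$ be a fixed constant such that $e^{-c_1(2a)^{-2i/3}}\le g_{a,i}\le e^{c_1(2a)^{-2i/3}}$ for all $a,i\ge1$ (e.g. $c_1=4$). Fix $s>0$; for each $n\ge1$ let $t=t_n\in(0,1)$ be the unique solution in $(0,1)$ of $\frac{4t}{(1+t)^2}=e^{-s/\sqrt n}$, i.e. $t=\frac{1-\sqrt{1-e^{-s/\sqrt n}}}{1+\sqrt{1-e^{-s/\sqrt n}}}$. Set $\delta_0=\left[\sup_{n\ge1}\left(n^{1/4}\log(1/t_n)\,e^{(c_1/4)+1}\right)\right]^{-1}$ (a positive number). Given a partition $\lambda$ of $n$ with $n_i$ parts of size $i$, for $a,i\ge1$ let \[ \mathsf K_{a,i}=\sum_{\nu=0}^{n_i}\frac1{2^{n_i}}\binom{n_i}{\nu}\frac{(f_{a,i}-\nu+n_i-1)!}{(f_{a,i}-\nu)!\,f_{a,i}^{\,n_i-1}},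 \] equivalently $\mathsf K_{a,i}=\frac{n_i!}{(2f_{a,i})^{n_i}}[x^{n_i}]\left(\frac{1+x}{1-x}\right)^{f_{a,i}}$ (here the ratio of factorials is the polynomial $\prod_{k=1}^{n_i-1}(f_{a,i}-\nu+k)$ when $n_i\ge1$, and $\mathsf K_{a,i}=1$ when $n_i=0$). For $A\subseteq\mathbb R$ define \[ \mathsf L_A=\frac{\log^{n+1}(1/t)}{n!}\sum_{a\in A\cap\{1,2,3,\dots\}}a^n t^a\prod_{1\le i\le n}g_{a,i}^{n_i}\mathsf K_{a,i}. \] *)

From Stdlib Require Import Reals.
From Coquelicot Require Import Coquelicot.
From mathcomp Require Import ssreflect ssrfun ssrbool eqtype ssrnat seq div prime binomial.

Open Scope R_scope.

Definition mobius (d : nat) : R :=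
  if all (fun p => logn p d == 1%N) (primes d) then (-1) ^ size (primes d) else 0.

Definition sumR (l : seq nat) (F : nat -> R) : R := foldr (fun x acc => F x + acc) 0 l.
Definition prodR (l : seq nat) (F : nat -> R) : R := foldr (fun x acc => F x * acc) 1 l.

Definition f_ai (a i : nat) : R :=
  / (2 * INR i) * sumR [seq d <- divisors i | odd d]
                       (fun d => mobius d * (2 * INR a) ^ (i %/ d)).

(* f_{a,i} = (2a)^i/(2i) * g_{a,i} *)
Definition g_ai (a i : nat) : R := f_ai a i * (2 * INR i) / (2 * INR a) ^ i.

(* K_{a,i} for multiplicity ni; the factorial ratio is the polynomial
   prod_{k=1}^{ni-1} (f - nu + k); K = 1 when ni = 0. *)
Definition K_ai (a i ni : nat) : R :=
  match ni with
  | O => 1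
  | S m => sumR (iota 0 ni.+1)
             (fun nu => / 2 ^ ni * INR 'C(ni, nu)
                        * prodR (iota 1 m) (fun k => f_ai a i - INR nu + INR k)
                        / (f_ai a i) ^ m)
  end.

Definition t_n (s : R) (n : nat) : R :=
  (1 - sqrt (1 - exp (- s / sqrt (INR n)))) / (1 + sqrt (1 - exp (- s / sqrt (INR n)))).

Definition delta0 (s c1 : R) : R :=
  / real (Lub_Rbar (fun x => exists n : nat, (0 < n)%N /\
            x = Rpower (INR n) (/ 4) * ln (/ t_n s n) * exp (c1 / 4 + 1))).

(* A partition of n given by its multiplicities m i (number of parts of size i). *)
Definition is_partition (n : nat) (m : nat -> nat) : Prop :=
  (forall i, (n < i)%N -> m i = 0%N) /\
  sumn [seq (i * m i)%N | i <- iota 1 n] = n.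

(* L_{[0,X]} for the partition with multiplicities m of n (sum over integers
   1 <= a <= X; every such a is at most Z.to_nat (up X)). *)
Definition L_upto (s : R) (n : nat) (m : nat -> nat) (X : R) : R :=
  ln (/ t_n s n) ^ (n + 1) / INR (Stdlib.Arith.Factorial.fact n) *
  sumR (iota 1 (Z.to_nat (up X)))
       (fun a => if Rle_dec (INR a) X then
                   INR a ^ n * t_n s n ^ a *
                   prodR (iota 1 n) (fun i => g_ai a i ^ (m i) * K_ai a i (m i))
                 else 0).

(* Write l = log(1/t_n) and X = delta n^(5/4).  Since |K_{a,i}| <= (1 + n_i/f_{a,i})^(n_i)
   and a^i g_{a,i} = (2i/2^i) f_{a,i}, each block of the product satisfies
   a^(i n_i) |g_{a,i}^(n_i) K_{a,i}| <= (a G_a + n)^(i n_i), where G_a bounds g_{a,i}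
   uniformly in i; as sum_i i n_i = n, every summand of L is at most
   (X e^(c1/4) + 8 e^c1 + n)^n.  The definition of delta_0 gives l <= C n^(-1/4) with
   C e^(c1/4+1) = 1/delta_0, and n^n <= e^n n! then yields
   L <= C (X + 1) (delta/delta_0 + M n^(-1/4))^n.  For delta/delta_0 < r < rho the
   perturbation costs only (1 + K n^(-1/4))^n <= e^(K n^(3/4)), which together with the
   polynomial factor is absorbed by (r/rho)^n = e^(-b n). *)

From Stdlib Require Import Reals Lra Lia ZArith.
From Coquelicot Require Import Coquelicot.
From mathcomp Require Import ssreflect ssrfun ssrbool eqtype ssrnat seq div prime binomial.
From mathcomp Require Import bigop.
Open Scope R_scope.

Lemma sumR_le (l : seq nat) F G : (forall x, x \in l -> F x <= G x) -> sumR l F <= sumR l G.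
Proof.
elim: l => [|x l' IH] H /=; first lra.
have := H x (mem_head _ _).
have : sumR l' F <= sumR l' G by apply: IH => y hy; apply: H; rewrite in_cons hy orbT.
lra.
Qed.

Lemma sumR_const (l : seq nat) c : sumR l (fun _ => c) = INR (size l) * c.
Proof.
elim: l => [|x l' IH]; first by rewrite /=; ring.
by rewrite [size _]/= S_INR -[sumR _ _]/(c + sumR l' _) IH; ring.
Qed.

Lemma sumR_le_const (l : seq nat) F c :
  (forall x, x \in l -> F x <= c) -> sumR l F <= INR (size l) * c.
Proof. by move=> H; rewrite -sumR_const; apply: sumR_le. Qed.

Lemma Rabs_sumR_le (l : seq nat) F : Rabs (sumR l F) <= sumR l (fun x => Rabs (F x)).
Proof.
elim: l => [|x l' IH] /=; first (rewrite Rabs_R0; lra).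
have := Rabs_triang (F x) (sumR l' F); lra.
Qed.

Lemma sumR_mull (l : seq nat) c F : sumR l (fun x => c * F x) = c * sumR l F.
Proof. elim: l => [|x l' IH] /=; [ring | rewrite IH; ring]. Qed.

Lemma sumR_INR (l : seq nat) F : sumR l (fun x => INR (F x)) = INR (\sum_(x <- l) F x)%N.
Proof.
elim: l => [|x l' IH] /=; first by rewrite big_nil.
by rewrite big_cons IH -plus_INR.
Qed.

Lemma Rabs_prodR (l : seq nat) F : Rabs (prodR l F) = prodR l (fun x => Rabs (F x)).
Proof. elim: l => [|x l' IH] /=; [exact: Rabs_R1 | by rewrite Rabs_mult IH]. Qed.

Lemma prodR_ge0 (l : seq nat) F : (forall x, x \in l -> 0 <= F x) -> 0 <= prodR l F.
Proof.
elim: l => [|x l' IH] H /=; first lra.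
apply: Rmult_le_pos; first exact: H (mem_head _ _).
by apply: IH => y hy; apply: H; rewrite in_cons hy orbT.
Qed.

Lemma prodR_le (l : seq nat) F G :
  (forall x, x \in l -> 0 <= F x <= G x) -> prodR l F <= prodR l G.
Proof.
elim: l => [|x l' IH] H /=; first lra.
have H' y : y \in l' -> 0 <= F y <= G y by move=> hy; apply: H; rewrite in_cons hy orbT.
have := H x (mem_head _ _); have := IH H'.
have := prodR_ge0 l' F (fun y hy => proj1 (H' y hy)).
by move=> *; apply: Rmult_le_compat; lra.
Qed.

Lemma prodRM (l : seq nat) F G : prodR l (fun x => F x * G x) = prodR l F * prodR l G.
Proof. elim: l => [|x l' IH] /=; [ring | rewrite IH; ring]. Qed.

Lemma prodR_const (l : seq nat) c : prodR l (fun _ => c) = c ^ size l.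
Proof. by elim: l => [|x l' IH] //=; rewrite IH. Qed.

Lemma prodR_pow (l : seq nat) c (h : nat -> nat) :
  prodR l (fun x => c ^ h x) = c ^ sumn (map h l).
Proof. by elim: l => [|x l' IH] //=; rewrite IH pow_add. Qed.

Lemma Rabs_prodR_le (l : seq nat) F c :
  (forall x, x \in l -> Rabs (F x) <= c) -> Rabs (prodR l F) <= c ^ size l.
Proof.
move=> H; rewrite Rabs_prodR -prodR_const; apply: prodR_le => x hx.
by split; [exact: Rabs_pos | exact: H].
Qed.

Lemma sumR_binomial m : sumR (iota 0 m.+1) (fun k => INR 'C(m, k)) = 2 ^ m.
Proof.
rewrite sumR_INR.
have -> : (\sum_(k <- iota 0 m.+1) 'C(m, k))%N = (2 ^ m)%N.
  rewrite -[2%N]/(1 + 1)%N expnDn.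
  rewrite -(big_mkord xpredT (fun k => 'C(m, k) * (1 ^ (m - k) * 1 ^ k))%N).
  by rewrite /index_iota subn0; apply: eq_bigr => k _; rewrite !exp1n !muln1.
by elim: m => [|m IH] //=; rewrite expnS -multE mult_INR IH.
Qed.

Lemma exp_le_compat x y : x <= y -> exp x <= exp y.
Proof.
by case/Rle_lt_or_eq_dec => [/exp_increasing/Rlt_le | ->]; [| exact: Rle_refl].
Qed.

Lemma exp_pow x n : exp x ^ n = exp (x * INR n).
Proof.
elim: n => [|n IH]; first by rewrite /= Rmult_0_r exp_0.
by rewrite [exp x ^ _]/= IH -exp_plus S_INR; f_equal; ring.
Qed.

Lemma pow_1_plus_le_exp x n : 0 <= x -> (1 + x) ^ n <= exp (x * INR n).
Proof.
move=> hx; rewrite -exp_pow; apply: pow_incr; have := exp_ineq1_le x; lra.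
Qed.

Lemma sqr_div2_le_exp y : 0 <= y -> y ^ 2 / 2 <= exp y.
Proof.
move=> hy; have := exp_ge_taylor y 2 hy.
have -> : sum_f_R0 (fun k => y ^ k / INR (Factorial.fact k)) 2 = 1 + y + y ^ 2 / 2.
  by rewrite /=; field.
lra.
Qed.

Lemma pow_self_le_exp_fact n : INR n ^ n <= exp (INR n) * INR (Factorial.fact n).
Proof.
have hf : 0 < INR (Factorial.fact n) by apply/lt_0_INR/Factorial.lt_O_fact.
set u := fun k => INR n ^ k / INR (Factorial.fact k).
have hu : forall k, 0 <= u k.
  move=> k; apply: Rdiv_le_0_compat; first exact/pow_le/pos_INR.
  exact/lt_0_INR/Factorial.lt_O_fact.
have hun : u n <= sum_f_R0 u n.
  case: n {hf} u hu => [|n] u hu /=; first lra.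
  by have := cond_pos_sum u n hu; lra.
have := exp_ge_taylor (INR n) n (pos_INR n); rewrite -/u => hexp.
have -> : INR n ^ n = u n * INR (Factorial.fact n) by rewrite /u; field; lra.
apply: Rmult_le_compat_r; lra.
Qed.

Lemma pow_add_le_pow_add x y k :
  (0 < k)%N -> 0 <= x -> 0 <= y -> x ^ k + y ^ k <= (x + y) ^ k.
Proof.
case: k => // k _ hx hy; elim: k => [|k IH]; first by rewrite /=; lra.
change (x * x ^ k.+1 + y * y ^ k.+1 <= (x + y) * (x + y) ^ k.+1).
have := pow_le x k.+1 hx; have := pow_le y k.+1 hy; nra.
Qed.

(* Every factor f - nu + k has modulus at most f + n_i, and the binomial weights sum to 1. *)
Lemma Rabs_K_ai_le a i m :
  0 < f_ai a i -> Rabs (K_ai a i m) <= ((f_ai a i + INR m) / f_ai a i) ^ m.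
Proof.
move=> hf; set f := f_ai a i in hf *.
have hge1 : 1 <= (f + INR m) / f.
  by apply/Rle_div_r; [| have := pos_INR m]; lra.
case: m hge1 => [|m] hge1; first by rewrite /K_ai Rabs_R1 /=; lra.
rewrite /K_ai -/f; set M := m.+1.
apply: Rle_trans (_ : ((f + INR M) / f) ^ m <= _); last by apply: Rle_pow => //; lia.
have hfm : 0 < f ^ m by apply: pow_lt.
have h2M : 0 < 2 ^ M by apply: pow_lt; lra.
set c := / 2 ^ M * ((f + INR M) ^ m / f ^ m).
have hterm : forall nu, nu \in iota 0 M.+1 ->
    Rabs (/ 2 ^ M * INR 'C(M, nu) * prodR (iota 1 m) (fun k => f - INR nu + INR k) / f ^ m)
    <= c * INR 'C(M, nu).
  move=> nu; rewrite mem_iota add0n ltnS => /andP [_ /leP /le_INR hnu].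
  have hP : Rabs (prodR (iota 1 m) (fun k => f - INR nu + INR k)) <= (f + INR M) ^ m.
    rewrite -{2}(size_iota 1 m); apply: Rabs_prodR_le => k.
    rewrite mem_iota add1n ltnS => /andP [_ /leP /le_INR hk].
    have := pos_INR k; have := pos_INR nu; have : INR m <= INR M by apply/le_INR; lia.
    move=> *; apply: Rabs_le; lra.
  have hC := pos_INR 'C(M, nu).
  have hinv : 0 < / 2 ^ M by apply: Rinv_0_lt_compat.
  rewrite /Rdiv !Rabs_mult !Rabs_inv (Rabs_pos_eq (2 ^ M)) ?(Rabs_pos_eq (INR _))
    ?(Rabs_pos_eq (f ^ m)); try lra.
  have -> : c * INR 'C(M, nu) = / 2 ^ M * INR 'C(M, nu) * (f + INR M) ^ m * / f ^ m.
    by rewrite /c /Rdiv; ring.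
  apply: Rmult_le_compat_r; first exact/Rlt_le/Rinv_0_lt_compat.
  by apply: Rmult_le_compat_l; first nra.
apply: Rle_trans (Rabs_sumR_le _ _) _; apply: Rle_trans (sumR_le _ _ _ hterm) _.
rewrite sumR_mull sumR_binomial /c /Rdiv Rpow_mult_distr pow_inv.
by right; field; lra.
Qed.

Lemma f_ai_pos a i : (0 < a)%N -> (0 < i)%N -> 0 < g_ai a i -> 0 < f_ai a i.
Proof.
move=> /ltP/lt_0_INR ha /ltP/lt_0_INR hi hg.
have hp : 0 < (2 * INR a) ^ i by apply: pow_lt; lra.
have -> : f_ai a i = g_ai a i * (2 * INR a) ^ i / (2 * INR i) by rewrite /g_ai; field; lra.
apply: Rdiv_lt_0_compat; nra.
Qed.

Lemma pow_mul_g_ai a i : (0 < a)%N -> INR a ^ i * g_ai a i = 2 * INR i / 2 ^ i * f_ai a i.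
Proof.
move=> /ltP/lt_0_INR ha.
have := pow_lt _ i ha; have : 0 < 2 ^ i by apply: pow_lt; lra.
by rewrite /g_ai Rpow_mult_distr => *; field; lra.
Qed.

Lemma factor_base_le a i m n G : (0 < a)%N -> (0 < i)%N -> (0 < n)%N -> (i * m <= n)%N ->
  0 < g_ai a i <= G -> 1 <= G ->
  INR a ^ i * g_ai a i * ((f_ai a i + INR m) / f_ai a i) <= (INR a * G + INR n) ^ i.
Proof.
move=> ha hi hn him [hg0 hgG] hG.
have hf := f_ai_pos a i ha hi hg0.
have [ha1 hi1 hn1] : [/\ 1 <= INR a, 1 <= INR i & 1 <= INR n].
  by split; apply: (le_INR 1); apply/leP.
have h2i : 2 <= 2 ^ i by rewrite -{1}(pow_1 2); apply: Rle_pow => //; [lra | apply/leP].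
have -> : INR a ^ i * g_ai a i * ((f_ai a i + INR m) / f_ai a i)
    = INR a ^ i * g_ai a i + 2 * INR i * INR m / 2 ^ i.
  by rewrite pow_mul_g_ai //; field; lra.
have hfirst : INR a ^ i * g_ai a i <= (INR a * G) ^ i.
  rewrite Rpow_mult_distr; apply: Rmult_le_compat_l; first exact/pow_le/pos_INR.
  by rewrite -{1}(pow_1 G) in hgG *; apply: Rle_trans hgG (Rle_pow _ _ _ hG _); apply/leP.
have hsecond : 2 * INR i * INR m / 2 ^ i <= INR n ^ i.
  have him' : INR i * INR m <= INR n by rewrite -mult_INR; apply/le_INR/leP.
  have hni : INR n <= INR n ^ i.
    by rewrite -{1}(pow_1 (INR n)); apply: Rle_pow => //; apply/leP.
  apply/Rle_div_l; first lra.
  have := pos_INR m; nra.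
have := pow_add_le_pow_add (INR a * G) (INR n) i hi ltac:(nra) ltac:(lra); lra.
Qed.

Lemma factor_le a i m n G : (0 < a)%N -> (0 < i)%N -> (0 < n)%N -> (i * m <= n)%N ->
  0 < g_ai a i <= G -> 1 <= G ->
  INR a ^ (i * m) * Rabs (g_ai a i ^ m * K_ai a i m) <= (INR a * G + INR n) ^ (i * m).
Proof.
move=> ha hi hn him hgG hG.
have hf := f_ai_pos a i ha hi (proj1 hgG).
have hK := Rabs_K_ai_le a i m hf.
have hbase := factor_base_le a i m n G ha hi hn him hgG hG.
set g := g_ai a i in hgG hbase *.
set r := (f_ai a i + INR m) / f_ai a i in hK hbase *.
have hai : 0 <= INR a ^ i by exact/pow_le/pos_INR.
have hr : 0 <= r by apply: Rdiv_le_0_compat; have := pos_INR m; lra.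
have hpow_mul x : x ^ (i * m)%N = (x ^ i) ^ m by rewrite -multE pow_mult.
rewrite !hpow_mul Rabs_mult (Rabs_pos_eq (_ ^ m)); last exact/pow_le/Rlt_le/(proj1 hgG).
clearbody g r.
apply: (Rle_trans _ ((INR a ^ i * g * r) ^ m)).
  rewrite !Rpow_mult_distr -Rmult_assoc; apply: Rmult_le_compat_l => //.
  by apply: Rmult_le_pos; apply: pow_le => //; case: hgG; lra.
apply: pow_incr; split => //.
by apply: Rmult_le_pos => //; apply: Rmult_le_pos => //; case: hgG; lra.
Qed.

Lemma leq_sumn (s : seq nat) x : x \in s -> (x <= sumn s)%N.
Proof. by move/perm_to_rem/perm_sumn => ->; exact: leq_addr. Qed.

Lemma summand_le n (m : nat -> nat) a t G :
  (0 < n)%N -> (0 < a)%N -> is_partition n m -> 0 < t <= 1 -> 1 <= G ->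
  (forall i, (0 < i)%N -> 0 < g_ai a i <= G) ->
  Rabs (INR a ^ n * t ^ a * prodR (iota 1 n) (fun i => g_ai a i ^ m i * K_ai a i (m i)))
  <= (INR a * G + INR n) ^ n.
Proof.
move=> hn ha [_ hsum] ht hG hg.
have hta : 0 <= t ^ a <= 1 by split; [apply: pow_le | rewrite -(pow1 a); apply: pow_incr]; lra.
have han : 0 <= INR a ^ n by exact/pow_le/pos_INR.
have hsplit x : x ^ n = prodR (iota 1 n) (fun i => x ^ (i * m i)%N) by rewrite prodR_pow hsum.
set P := prodR _ _; have hP := Rabs_pos P.
rewrite !Rabs_mult (Rabs_pos_eq (INR a ^ n)) // (Rabs_pos_eq (t ^ a)); last lra.
apply: (Rle_trans _ (INR a ^ n * Rabs P)); first by apply: Rmult_le_compat_r => //; nra.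
rewrite (hsplit (INR a)) (hsplit (INR a * G + INR n)) /P Rabs_prodR -prodRM.
apply: prodR_le => i hi; have hi0 : (0 < i)%N by move: hi; rewrite mem_iota => /andP [].
split; first by apply: Rmult_le_pos; [exact/pow_le/pos_INR | exact: Rabs_pos].
apply: factor_le => //; last by have := hg i hi0; lra.
by rewrite -hsum; apply/leq_sumn/map_f.
Qed.

Lemma Rpower_opp_le1 x y : 1 <= x -> 0 <= y -> Rpower x (- y) <= 1.
Proof.
move=> hx hy; rewrite /Rpower -exp_0; apply: exp_le_compat.
have : 0 <= ln x by rewrite -ln_1; apply: ln_le; lra.
nra.
Qed.

Lemma Rpower_opp_le_quarter x y : 16 <= x -> 2 / 3 <= y -> Rpower x (- y) <= / 4.
Proof.
move=> hx hy.
have hl2 : 0 < ln 2 by rewrite -ln_1; apply: ln_increasing; lra.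
have hln_pow k : ln (2 ^ k) = INR k * ln 2 by apply: ln_pow; lra.
have hl16 : 4 * ln 2 <= ln x.
  have -> : 4 * ln 2 = ln (2 ^ 4) by rewrite hln_pow /=; ring.
  by apply: ln_le => /=; lra.
have -> : / 4 = exp (- (2 * ln 2)).
  have -> : 2 * ln 2 = ln (2 ^ 2) by rewrite hln_pow /=; ring.
  by rewrite exp_Ropp exp_ln /=; [field | lra].
rewrite /Rpower; apply: exp_le_compat; nra.
Qed.

(* (2a)^(-2i/3) <= 1/4 once a >= 8, so only the a < 8 pay the crude bound e^c1. *)
Definition g_majorant (c1 : R) (a : nat) : R := if (8 <= a)%N then exp (c1 / 4) else exp c1.

Lemma one_le_g_majorant c1 a : 0 < c1 -> 1 <= g_majorant c1 a.
Proof.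
by move=> hc; rewrite /g_majorant -exp_0; case: ifP => _; apply: exp_le_compat; lra.
Qed.

Lemma g_ai_le_majorant c1 a i : 0 < c1 -> (0 < a)%N -> (0 < i)%N ->
  g_ai a i <= exp (c1 * Rpower (2 * INR a) (- (2 * INR i / 3))) ->
  g_ai a i <= g_majorant c1 a.
Proof.
move=> hc /leP/(le_INR 1) ha /leP/(le_INR 1) hi hg; apply: Rle_trans hg _.
rewrite /g_majorant; case: ifP => h8; apply: exp_le_compat.
  have : INR 8 <= INR a by apply/le_INR/leP.
  rewrite /= => {}h8; have := Rpower_opp_le_quarter (2 * INR a) (2 * INR i / 3).
  by rewrite /= in hi; move/(_ ltac:(lra) ltac:(lra)); nra.
have := Rpower_opp_le1 (2 * INR a) (2 * INR i / 3).
by rewrite /= in ha hi; move/(_ ltac:(lra) ltac:(lra)); nra.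
Qed.

Lemma mul_g_majorant_le c1 a X : INR a <= X ->
  INR a * g_majorant c1 a <= X * exp (c1 / 4) + 8 * exp c1.
Proof.
move=> haX; have := exp_pos (c1 / 4); have := exp_pos c1; have := pos_INR a.
rewrite /g_majorant; case: ifP => h8; first nra.
have : INR a <= INR 8 by apply/le_INR/leP/ltnW; rewrite ltnNge h8.
rewrite /=; nra.
Qed.

Lemma L_upto_le s c1 n m X : 0 < c1 -> (0 < n)%N -> is_partition n m ->
  0 < t_n s n <= 1 -> 0 <= ln (/ t_n s n) -> 0 <= X ->
  (forall a i : nat, (0 < a)%N -> (0 < i)%N ->
     0 < g_ai a i <= exp (c1 * Rpower (2 * INR a) (- (2 * INR i / 3)))) ->
  L_upto s n m X <= ln (/ t_n s n) ^ (n + 1) / INR (Factorial.fact n) *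
     (INR (Z.to_nat (up X)) * (X * exp (c1 / 4) + 8 * exp c1 + INR n) ^ n).
Proof.
move=> hc hn hpart ht hl hX hg; rewrite /L_upto.
apply: Rmult_le_compat_l.
  by apply: Rdiv_le_0_compat; [exact: pow_le | exact/lt_0_INR/Factorial.lt_O_fact].
rewrite -[in INR (Z.to_nat _)](size_iota 1 (Z.to_nat (up X))); apply: sumR_le_const => a.
rewrite mem_iota => /andP [ha _].
have hY : 0 <= X * exp (c1 / 4) + 8 * exp c1 + INR n.
  by have := exp_pos (c1 / 4); have := exp_pos c1; have := pos_INR n; nra.
case: Rle_dec => haX; last exact: pow_le.
apply: Rle_trans (Rle_abs _) _.
apply: Rle_trans (summand_le n m a (t_n s n) (g_majorant c1 a) hn ha hpart ht _ _) _.
- exact: one_le_g_majorant.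
- move=> i hi; have [hg0 hgi] := hg a i ha hi.
  by split; last exact: g_ai_le_majorant.
apply: pow_incr; split.
  by have := one_le_g_majorant c1 a hc; have := pos_INR a; have := pos_INR n; nra.
by have := mul_g_majorant_le c1 a X haX; lra.
Qed.

Lemma t_n_bounds s n : 0 < s -> (0 < n)%N -> 0 < t_n s n < 1.
Proof.
move=> hs /ltP/lt_0_INR hn.
have hneg : - s / sqrt (INR n) < 0.
  have := Rdiv_lt_0_compat _ _ hs (sqrt_lt_R0 _ hn); rewrite /Rdiv; lra.
have := exp_pos (- s / sqrt (INR n)); have := exp_increasing _ _ hneg; rewrite exp_0.
rewrite /t_n; set u := 1 - exp _ => he1 he0.
have hr0 : 0 < sqrt u by apply: sqrt_lt_R0; rewrite /u; lra.
have hr1 : sqrt u < 1 by rewrite -sqrt_1; apply: sqrt_lt_1_alt; rewrite /u; lra.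
by split; [apply: Rdiv_lt_0_compat | apply/Rlt_div_l]; lra.
Qed.

Lemma ln_inv_t_n_pos s n : 0 < s -> (0 < n)%N -> 0 < ln (/ t_n s n).
Proof.
move=> hs hn; have [ht0 ht1] := t_n_bounds s n hs hn.
by rewrite ln_Rinv //; have := ln_increasing _ _ ht0 ht1; rewrite ln_1; lra.
Qed.

Lemma delta0_inv_sup s c1 : 0 < delta0 s c1 -> exists S, 0 < S /\ delta0 s c1 = / S /\
  forall n, (0 < n)%N -> Rpower (INR n) (/ 4) * ln (/ t_n s n) * exp (c1 / 4 + 1) <= S.
Proof.
rewrite /delta0; set E := fun x => _.
have := Lub_Rbar_correct E; case: (Lub_Rbar E) => [S | |] /= [hub _] hd;
  try by rewrite Rinv_0 in hd; lra.
exists S; split; first by rewrite -(Rinv_inv S); exact: Rinv_0_lt_compat.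
by split=> // n hn; apply: (hub _ (ex_intro _ n (conj hn erefl))).
Qed.

Lemma Rpower_quarter_ge1 x : 1 <= x -> 1 <= Rpower x (/ 4).
Proof. by move=> hx; rewrite -(Rpower_O x); [apply: Rle_Rpower|]; lra. Qed.

Lemma Rpower_quarter_pow4 x : 0 < x -> Rpower x (/ 4) ^ 4 = x.
Proof.
move=> hx; rewrite -Rpower_pow; last exact: exp_pos.
rewrite Rpower_mult; have -> : / 4 * INR 4 = 1 by rewrite /=; field.
exact: Rpower_1.
Qed.

Lemma Rpower_five_quarters x : 0 < x -> Rpower x (5 / 4) = x * Rpower x (/ 4).
Proof. by move=> hx; rewrite -{2}(Rpower_1 x hx) -Rpower_plus; f_equal; field. Qed.

Lemma INR_up_le X : 0 <= X -> INR (Z.to_nat (up X)) <= X + 1.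
Proof.
move=> hX; have [h1 h2] := archimed X.
by rewrite INR_IZR_INZ Z2Nat.id; [lra | apply: le_IZR; lra].
Qed.

Lemma prefactor_le (l w C d E e1 N : R) (n : nat) :
  0 <= l -> l * w <= C -> 1 <= w -> (0 < n)%N -> 0 < d -> 0 < E -> 0 <= e1 ->
  0 <= N <= d * (INR n * w) + 1 ->
  l ^ (n + 1) / INR (Factorial.fact n) * (N * (d * (INR n * w) * E + 8 * e1 + INR n) ^ n)
  <= C * (d * (INR n * w) + 1) * (exp 1 * C * d * E + exp 1 * C * (8 * e1 + 1) / w) ^ n.
Proof.
move=> hl hlw hw /leP/(le_INR 1) hn hd hE he1 [hN0 hN].
rewrite /= in hn.
have hfact : 0 < INR (Factorial.fact n) by apply/lt_0_INR/Factorial.lt_O_fact.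
have hlC : l <= C by nra.
set Y := _ + INR n; set Z := C * d * E + C * (8 * e1 + 1) / w.
have hX : 0 <= d * (INR n * w) by apply: Rmult_le_pos; nra.
have hY : 0 <= Y by rewrite /Y; nra.
have hlY : l * Y <= INR n * Z.
  have hlCw : l <= C / w by apply/Rle_div_r; lra.
  have -> : l * Y = l * w * (d * INR n * E) + l * (8 * e1 + INR n) by rewrite /Y; field; lra.
  have -> : INR n * Z = C * (d * INR n * E) + C / w * (INR n * (8 * e1 + 1)).
    by rewrite /Z; field; lra.
  apply: Rplus_le_compat; apply: Rmult_le_compat => //; nra.
have hpow : (l * Y) ^ n / INR (Factorial.fact n) <= (exp 1 * Z) ^ n.
  apply/Rle_div_l => //.
  apply: (Rle_trans _ ((INR n * Z) ^ n)); first by apply: pow_incr; split; nra.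
  rewrite !Rpow_mult_distr exp_pow Rmult_1_l.
  have := pow_self_le_exp_fact n; have : 0 <= Z ^ n by apply: pow_le; nra.
  nra.
have -> : exp 1 * C * d * E + exp 1 * C * (8 * e1 + 1) / w = exp 1 * Z.
  by rewrite /Z; field; lra.
have -> : l ^ (n + 1) / INR (Factorial.fact n) * (N * Y ^ n)
    = l * N * ((l * Y) ^ n / INR (Factorial.fact n)).
  by rewrite pow_add Rpow_mult_distr /=; field; lra.
apply: Rmult_le_compat => //; [nra | | nra].
by apply: Rdiv_le_0_compat => //; apply: pow_le; nra.
Qed.

Lemma cubic_sub_quartic_le K b w : 0 < K -> 0 < b -> 0 <= w ->
  K * w ^ 3 - b * w ^ 4 <= 8 * K ^ 4 / b ^ 3 - b * w ^ 4 / 2.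
Proof.
move=> hK hb hw.
have hw3 : 0 <= w ^ 3 by apply: pow_le.
have hT : 0 <= 8 * K ^ 4 / b ^ 3.
  by apply: Rdiv_le_0_compat; [have := pow_le K 4; lra | apply: pow_lt].
case: (Rle_lt_dec (2 * K / b) w) => hcase.
  have : 2 * K <= b * w by move/Rle_div_l: hcase => /(_ hb); lra.
  have -> : w ^ 4 = w * w ^ 3 by ring.
  nra.
have : K * w ^ 3 <= K * (2 * K / b) ^ 3.
  by apply: Rmult_le_compat_l; [lra | apply: pow_incr; lra].
have -> : K * (2 * K / b) ^ 3 = 8 * K ^ 4 / b ^ 3 by field; lra.
have := pow_le w 4 hw; nra.
Qed.

Lemma pow8_mul_exp_le b w : 0 < b -> w ^ 8 * exp (- (b * w ^ 4 / 2)) <= 8 / b ^ 2.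
Proof.
move=> hb; set y := b * w ^ 4 / 2.
have hy : 0 <= y.
  rewrite /y; have -> : w ^ 4 = (w ^ 2) ^ 2 by ring.
  by have := pow2_ge_0 (w ^ 2); nra.
have := sqr_div2_le_exp y hy.
have hb2 : 0 < b ^ 2 by apply: pow_lt.
have -> : w ^ 8 = 4 * y ^ 2 / b ^ 2 by rewrite /y; field; lra.
rewrite exp_Ropp; have := exp_pos y => hey h.
have -> : 4 * y ^ 2 / b ^ 2 * / exp y = 4 / b ^ 2 * (y ^ 2 / exp y) by field; lra.
have -> : 8 / b ^ 2 = 4 / b ^ 2 * 2 by field; lra.
apply: Rmult_le_compat_l; first by apply: Rdiv_le_0_compat; lra.
by apply/Rle_div_l; lra.
Qed.

Lemma pow_add_div_le_exp p r M w n : 0 <= p <= r -> 0 < r -> 0 < M -> 0 < w -> w ^ 4 = INR n ->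
  (p + M / w) ^ n <= r ^ n * exp (M / r * w ^ 3).
Proof.
move=> hpr hr hM hw hn.
have hMw : 0 < M / w by apply: Rdiv_lt_0_compat.
apply: (Rle_trans _ ((r * (1 + M / r / w)) ^ n)).
  apply: pow_incr; split; first lra.
  have -> : r * (1 + M / r / w) = r + M / w by field; lra.
  lra.
rewrite Rpow_mult_distr; apply: Rmult_le_compat_l; first by apply: pow_le; lra.
have -> : M / r * w ^ 3 = M / r / w * INR n by rewrite -hn; field; lra.
by apply: pow_1_plus_le_exp; apply/Rlt_le/Rdiv_lt_0_compat => //; apply: Rdiv_lt_0_compat.
Qed.

(* With r strictly between p and rho, (r/rho)^n = e^(-b w^4) beats both e^(K w^3) and the
   polynomial prefactor. *)
Lemma perturbed_pow_le_geometric (d p M rho : R) :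
  0 < d -> 0 < p -> p < rho -> 0 < M ->
  exists c, 0 < c /\ forall (n : nat) (w : R), 1 <= w -> w ^ 4 = INR n ->
    (d * (INR n * w) + 1) * (p + M / w) ^ n <= c * rho ^ n.
Proof.
move=> hd hp hprho hM.
set r := (p + rho) / 2; set K := M / r; set b := ln (rho / r).
have hr : 0 < r by rewrite /r; lra.
have hK : 0 < K by apply: Rdiv_lt_0_compat.
have hb : 0 < b.
  by rewrite /b -ln_1; apply: ln_increasing; [lra | apply/Rlt_div_r; rewrite /r; lra].
set E := exp (8 * K ^ 4 / b ^ 3); have hE : 0 < E by exact: exp_pos.
exists ((d + 1) * (8 / b ^ 2) * E); split.
  apply: Rmult_lt_0_compat => //; apply: Rmult_lt_0_compat; first lra.
  by apply: Rdiv_lt_0_compat; [lra | exact: pow_lt].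
move=> n w hw hn.
have hrho : 0 < rho ^ n by apply: pow_lt; lra.
have hrn : r ^ n = rho ^ n * exp (- b * w ^ 4).
  have -> : r = rho * exp (- b).
    by rewrite exp_Ropp /b exp_ln; [field | apply: Rdiv_lt_0_compat]; lra.
  by rewrite Rpow_mult_distr exp_pow hn.
have hpoly : d * (INR n * w) + 1 <= (d + 1) * w ^ 8.
  have h58 : w ^ 4 * w <= w ^ 8.
    have -> : w ^ 8 = w ^ 4 * w ^ 4 by ring.
    apply: Rmult_le_compat_l; first by apply: pow_le; lra.
    by rewrite -{1}(pow_1 w); apply: Rle_pow => //; lia.
  have : 1 <= w ^ 8 by rewrite -(pow1 8); apply: pow_incr; lra.
  by rewrite -hn; nra.
have hpow : (p + M / w) ^ n <= rho ^ n * (E * exp (- (b * w ^ 4 / 2))).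
  apply: Rle_trans (pow_add_div_le_exp p r M w n _ hr hM _ hn) _; try (rewrite /r; lra).
  rewrite -/K hrn Rmult_assoc -exp_plus /E -exp_plus.
  apply: Rmult_le_compat_l; first lra.
  by apply: exp_le_compat; have := cubic_sub_quartic_le K b w hK hb ltac:(lra); lra.
apply: (Rle_trans _ ((d + 1) * w ^ 8 * (rho ^ n * (E * exp (- (b * w ^ 4 / 2)))))).
  apply: Rmult_le_compat => //; last by apply: pow_le; have := Rdiv_lt_0_compat M w; lra.
  have : 0 <= INR n * w by apply: Rmult_le_pos; [exact: pos_INR | lra].
  nra.
have hcoef : 0 <= (d + 1) * E * rho ^ n by apply: Rmult_le_pos; nra.
have -> : (d + 1) * w ^ 8 * (rho ^ n * (E * exp (- (b * w ^ 4 / 2))))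
  = (d + 1) * E * rho ^ n * (w ^ 8 * exp (- (b * w ^ 4 / 2))) by ring.
have -> : (d + 1) * (8 / b ^ 2) * E * rho ^ n = (d + 1) * E * rho ^ n * (8 / b ^ 2) by ring.
exact: Rmult_le_compat_l hcoef (pow8_mul_exp_le b w hb).
Qed.

Lemma L_upto_le_perturbed s c1 C delta n m :
  0 < s -> 0 < c1 -> 0 < delta -> (0 < n)%N -> is_partition n m ->
  (forall a i : nat, (0 < a)%N -> (0 < i)%N ->
     0 < g_ai a i <= exp (c1 * Rpower (2 * INR a) (- (2 * INR i / 3)))) ->
  let w := Rpower (INR n) (/ 4) in
  ln (/ t_n s n) * w <= C ->
  L_upto s n m (delta * Rpower (INR n) (5 / 4))
  <= C * (delta * (INR n * w) + 1)
     * (exp 1 * C * delta * exp (c1 / 4) + exp 1 * C * (8 * exp c1 + 1) / w) ^ n.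
Proof.
move=> hs hc1 hd hn hpart hg w hlw.
have hn1 : 1 <= INR n by apply: (le_INR 1); apply/leP.
have hw1 : 1 <= w := Rpower_quarter_ge1 _ hn1.
have [ht0 ht1] := t_n_bounds s n hs hn; have hl := ln_inv_t_n_pos s n hs hn.
rewrite Rpower_five_quarters -/w; last lra.
have hX : 0 <= delta * (INR n * w) by apply: Rmult_le_pos; nra.
apply: Rle_trans (L_upto_le s c1 n m _ hc1 hn hpart ltac:(lra) ltac:(lra) hX hg) _.
apply: prefactor_le => //; try lra; first exact: exp_pos.
- by have := exp_pos c1; lra.
- by split; [exact: pos_INR | have := INR_up_le _ hX; lra].
Qed.

Theorem lemma3p2 (s c1 : R) (hs : 0 < s) (hc1 : 0 < c1)
  (hg : forall a i : nat, (0 < a)%N -> (0 < i)%N ->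
        exp (- c1 * Rpower (2 * INR a) (- (2 * INR i / 3))) <= g_ai a i
        <= exp (c1 * Rpower (2 * INR a) (- (2 * INR i / 3))))
  (delta rho : R) (hd : 0 < delta < delta0 s c1)
  (hrho : delta / delta0 s c1 < rho < 1) :
  exists c3 : R, 0 < c3 /\
    forall (n : nat) (m : nat -> nat), (0 < n)%N -> is_partition n m ->
      L_upto s n m (delta * Rpower (INR n) (5 / 4)) <= c3 * rho ^ (n + 1).
Proof.
have [S [hS [hdelta0 hsup]]] := delta0_inv_sup s c1 ltac:(lra).
rewrite hdelta0 /Rdiv Rinv_inv in hrho.
have he := exp_pos 1; have he1 := exp_pos c1; have hE := exp_pos (c1 / 4).
set C := S / exp (c1 / 4 + 1).
have hC : 0 < C by apply: Rdiv_lt_0_compat => //; exact: exp_pos.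
have hdS : exp 1 * C * delta * exp (c1 / 4) = delta * S.
  by rewrite /C exp_plus; field; lra.
have hM : 0 < exp 1 * C * (8 * exp c1 + 1) by apply: Rmult_lt_0_compat; nra.
have hdelta : 0 < delta by lra.
have [c [hc Hc]] := perturbed_pow_le_geometric delta (delta * S) _ rho hdelta
  (Rmult_lt_0_compat _ _ hdelta hS) ltac:(lra) hM.
have hrho0 : 0 < rho by nra.
exists (C * c / rho); split=> [|n m hn hpart].
  by apply: Rdiv_lt_0_compat => //; apply: Rmult_lt_0_compat.
apply: Rle_trans (L_upto_le_perturbed s c1 C delta n m hs hc1 hdelta hn hpart _ _) _.
- move=> a i ha hi; have := hg a i ha hi.
  by have := exp_pos (- c1 * Rpower (2 * INR a) (- (2 * INR i / 3))); lra.
- by apply/(Rle_div_r _ S (exp (c1 / 4 + 1)) (exp_pos _)); have := hsup n hn; lra.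
rewrite hdS pow_add pow_1 Rmult_assoc.
have -> : C * c / rho * (rho ^ n * rho) = C * (c * rho ^ n) by field; lra.
apply: Rmult_le_compat_l; first lra.
apply: Hc; first by apply/Rpower_quarter_ge1/(le_INR 1)/leP.
exact/Rpower_quarter_pow4/lt_0_INR/ltP.
Qed.
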